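(* Let $\mathcal{F}\subseteq[\omega]^{<\omega}$ be a compact hereditary family covering $\omega$. A vector $y\in X^{\mathcal{F}}$ is an extreme point of the unit ball $B_{X^\mathcal{F}}=\{x\in X^\mathcal{F}:\lVert x\rVert^\mathcal{F}\le1\}$ if and only if there are $F\in\mathcal{F}^{MAX}$ and signs $\varepsilon_i\in\{-1,1\}$ ($i\in F$) such that $y(i)=\varepsilon_i$ for $i\in F$ and $y(i)=0$ for $i\notin F$.
   Context: $\omega=\{1,2,3,\dots\}$; $[\omega]^{<\omega}$ is the family of finite subsets of $\omega$, identified with elements of $2^\omega$; compact means compact in $2^\omega$; hereditary means closed under subsets. A partition is a family $\mathcal{P}\subseteq\mathcal{P}(\omega)$ with $\emptyset\in\mathcal{P}$, $\bigcup\mathcal{P}=\omega$, elements pairwise disjoint; $\mathbb{P}_\mathcal{F}$ is the set of partitions contained in $\mathcal{F}$. For $x\in\mathbb{R}^\omega$, $\lVert x\rVert^{\mathcal{F}}=\inf_{\mathcal{P}\in\mathbb{P}_\mathcal{F}}\sum_{F\in\mathcal{P}}\sup_{k\in F}|x(k)|$. $X^\mathcal{F}=\{x\in\mathbb{R}^\omega:\lim_n\lVert P_{\omega\setminus n}x\rVert^\mathcal{F}=0\}$, where $P_{\omega\setminus n}x$ agrees with $x$ on $\{n+1,\dots\}$ and is zero elsewhere. $\mathcal{F}^{MAX}$ is the set of maximal elements of $\mathcal{F}$, i.e. $F\in\mathcal{F}$ with $F\cup\{k\}\notin\mathcal{F}$ for every $k\in\omega\setminus F$. A point $e$ of a set $K$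 (not necessarily convex) is an extreme point of $K$ if there are no $x,z\in K$ different from $e$ and $t\in(0,1)$ with $e=(1-t)x+tz$. *)

From HB Require Import structures.
From mathcomp Require Import all_boot all_order all_algebra.
From mathcomp Require Import all_classical all_reals all_analysis.
Set Implicit Arguments. Unset Strict Implicit. Unset Printing Implicit Defensive.
Import Order.TTheory GRing.Theory Num.Theory.
Local Open Scope classical_set_scope.
Local Open Scope ring_scope.

(* omega is modelled by nat (0-based relabelling of {1,2,3,...}) *)
Definition nat_family := set (set nat).

Definition finite_family (F : nat_family) : Prop := forall A, F A -> finite_set A.

Definition hereditary (F : nat_family) : Prop :=
  forall A B, F A -> B `<=` A -> F B.

Definition covers_omega (F : nat_family) : Prop := \bigcup_(A in F) A = [set: nat].

(* identification of subsets of omega with points of 2^omega *)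
Definition to_cantor (A : set nat) : cantor_space := fun n => `[< A n >].

Definition compact_family (F : nat_family) : Prop := compact (to_cantor @` F).

Definition is_partition (P : nat_family) : Prop :=
  [/\ P set0, \bigcup_(A in P) A = [set: nat] &
      forall A B, P A -> P B -> A <> B -> A `&` B = set0].

(* sup_{k in A} |x k|, with the sup over the empty set equal to 0 *)
Definition supabs {R : realType} (x : nat -> R) (A : set nat) : \bar R :=
  ereal_sup ([set 0%E] `|` [set (`|x k|)%:E | k in A]).

Definition normF {R : realType} (F : nat_family) (x : nat -> R) : \bar R :=
  ereal_inf [set (\esum_(A in P) supabs x A) | P in [set P | is_partition P /\ P `<=` F]].

Definition tail {R : realType} (n : nat) (x : nat -> R) : nat -> R :=
  fun k => if (n < k)%N then x k else 0.

Definition XF {R : realType} (F : nat_family) : set (nat -> R) :=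
  [set x | (fun n => normF F (tail n x)) @ \oo --> 0%E].

Definition unit_ball {R : realType} (F : nat_family) : set (nat -> R) :=
  [set x | XF F x /\ (normF F x <= 1)%E].

Definition extreme_point {R : realType} (K : set (nat -> R)) (e : nat -> R) : Prop :=
  K e /\ ~ (exists x z (t : R), K x /\ K z /\ x <> e /\ z <> e /\ (0 < t < 1) /\
                                  e = (fun k => (1 - t) * x k + t * z k)).

Definition maximal_elt (F : nat_family) (A : set nat) : Prop :=
  F A /\ forall k, ~ A k -> ~ F (A `|` [set k]).

From HB Require Import structures.
From mathcomp Require Import all_boot all_order all_algebra.
From mathcomp Require Import all_classical all_reals all_analysis.
From mathcomp Require Import lra.
Import Order.TTheory GRing.Theory Num.Theory.
Local Open Scope classical_set_scope.
Local Open Scope ring_scope.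
Set Implicit Arguments. Unset Strict Implicit. Unset Printing Implicit Defensive.

(* Backward direction: a sign vector y on a maximal A of F has norm 1 (use the
   partition of omega into A and singletons).  If y = (1-t) x + t z in the ball,
   then x agrees with y on A because +-1 is extreme in [-1,1]; being unimodular
   on the maximal set A, x must vanish outside A, since otherwise every
   admissible partition would pay at least 1 for A and something more for the
   extra mass.

   Forward direction: the infimum defining the norm is attained (compactness of
   F and Tychonoff's theorem turn almost optimal partitions into an optimal
   one).  For an extreme y and an optimal partition P, at most one block of P
   carries positive weight, for otherwise weight can be shifted between two
   blocks in both directions.  Hence y is supported by one member B of F; an
   extreme point supported by a member G of F is unimodular on G (otherwise a
   coordinate can be moved both ways), and applying this to B and to B + {k}
   shows that |y| = 1 on B and that B is maximal. *)

Section SupAbs.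
Variable R : realType.
Implicit Types (x y : nat -> R) (A B : set nat).

Lemma supabs_ge0 y A : (0 <= supabs y A)%E.
Proof. by apply: ereal_sup_ubound; left. Qed.

Lemma supabs_ge y A k : A k -> ((`|y k|)%:E <= supabs y A)%E.
Proof. by move=> Ak; apply: ereal_sup_ubound; right; exists k. Qed.

Lemma supabs_le y A (c : \bar R) : (0 <= c)%E ->
  (forall k, A k -> ((`|y k|)%:E <= c)%E) -> (supabs y A <= c)%E.
Proof. by move=> c0 H; apply: ge_ereal_sup => z [->|[k Ak <-]] //; apply: H. Qed.

Lemma supabs_sub y A B : A `<=` B -> (supabs y A <= supabs y B)%E.
Proof.
move=> AB; apply: supabs_le => [|k /AB]; [exact: supabs_ge0 | exact: supabs_ge].
Qed.

Lemma eq_supabs x y A : (forall k, A k -> x k = y k) -> supabs x A = supabs y A.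
Proof.
move=> xy; apply/eqP; rewrite eq_le; apply/andP.
split; apply: supabs_le (supabs_ge0 _ _) _ => k Ak.
  by rewrite xy //; exact: supabs_ge.
by rewrite -xy //; exact: supabs_ge.
Qed.

Lemma supabs_eq0 y A k : supabs y A = 0%E -> A k -> y k = 0.
Proof.
by move=> y0 Ak; have := supabs_ge y Ak; rewrite y0 lee_fin normr_le0 => /eqP.
Qed.

Lemma supabs_gt0 y A : (0 < supabs y A)%E -> exists2 k, A k & y k != 0.
Proof.
move=> y0; apply: contrapT => /forall2NP yA; move: y0; rewrite lt_neqAle => /andP [/negP[]].
rewrite eq_sym eq_le supabs_ge0 andbT supabs_le // => k Ak.
by case: (yA k) => // /negP; rewrite negbK => /eqP ->; rewrite normr0.
Qed.

Lemma supabs_le_scaled x y A (r l : R) : 0 <= r ->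
  (forall k, A k -> x k = r * y k) -> (supabs y A <= l%:E)%E ->
  (supabs x A <= (r * l)%:E)%E.
Proof.
move=> r0 xy yl; have l0 : 0 <= l by rewrite -lee_fin (le_trans (supabs_ge0 y A) yl).
apply: supabs_le => [|k Ak]; first by rewrite lee_fin mulr_ge0.
rewrite xy // normrM ger0_norm // lee_fin ler_wpM2l // -lee_fin.
exact: le_trans (supabs_ge y Ak) yl.
Qed.

End SupAbs.

Section Esum.
Variables (R : realType) (T : choiceType).
Implicit Types (S : set T) (f g : T -> \bar R).
Local Open Scope ereal_scope.

Lemma esum_ge_term S f t : S t -> (forall u, S u -> 0 <= f u) ->
  f t <= \esum_(u in S) f u.
Proof.
move=> St f0; apply: esum_ge; exists [set t]; last by rewrite fsbig_set1.
by split; [exact: finite_set1 | move=> u ->].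
Qed.

Lemma esum_split1 S f t : S t -> (forall u, S u -> 0 <= f u) ->
  \esum_(u in S) f u = f t + \esum_(u in S `&` ~` [set t]) f u.
Proof.
move=> St f0; rewrite (esumID [set t]) //.
have -> : S `&` [set t] = [set t] by apply/seteqP; split => u; [case | move=> ->].
by rewrite esum_set1 //; exact: f0.
Qed.

Lemma esum_ge_two S f t1 t2 : S t1 -> S t2 -> t1 <> t2 ->
  (forall u, S u -> 0 <= f u) -> f t1 + f t2 <= \esum_(u in S) f u.
Proof.
move=> S1 S2 t12 f0; rewrite (esum_split1 S1 f0) leeD2l //.
by apply: esum_ge_term => [|u []]; [split => // /esym | move=> /f0].
Qed.

Lemma esum_le_subset S S' f : S `<=` S' -> (forall u, S' u -> 0 <= f u) ->
  \esum_(u in S) f u <= \esum_(u in S') f u.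
Proof.
move=> SS' f0; apply: ge_ereal_sup => _ [X [finX XS] <-].
by apply: esum_ge; exists X => //; split => // u /XS /SS'.
Qed.

Lemma esum_le_two_exceptions S f g t1 t2 : S t1 -> S t2 -> t1 <> t2 ->
  (forall u, S u -> 0 <= f u) -> (forall u, S u -> 0 <= g u) ->
  (forall u, S u -> u <> t1 -> u <> t2 -> f u <= g u) ->
  f t1 + f t2 <= g t1 + g t2 ->
  \esum_(u in S) f u <= \esum_(u in S) g u.
Proof.
move=> S1 S2 t12 f0 g0 fg f12.
have S2' : (S `&` ~` [set t1]) t2 by split => // /esym.
have f0' u : (S `&` ~` [set t1]) u -> 0 <= f u by case=> /f0.
have g0' u : (S `&` ~` [set t1]) u -> 0 <= g u by case=> /g0.
rewrite (esum_split1 S1 f0) (esum_split1 S1 g0).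
rewrite (esum_split1 S2' f0') (esum_split1 S2' g0') !addeA.
apply: leeD => //; apply: le_esum => u [[Su /= u1] /= u2].
exact: fg.
Qed.

End Esum.

Lemma disjointP (T : Type) (A B : set T) :
  (forall u, A u -> B u -> False) -> A `&` B = set0.
Proof. by move=> H; apply/seteqP; split => u // [/H]. Qed.

Section Partitions.
Implicit Types (P : nat_family) (A B D : set nat).

Lemma part_block P k : is_partition P -> exists2 D, P D & D k.
Proof.
case=> _ cover _; have : (\bigcup_(A in P) A) k by rewrite cover.
by case=> D PD Dk; exists D.
Qed.

Lemma part_uniq P D D' k : is_partition P -> P D -> P D' -> D k -> D' k -> D = D'.
Proof.
case=> _ _ disj PD PD' Dk D'k; apply: contrapT => neq.
by have := disj _ _ PD PD' neq; rewrite -subset0 => /(_ k); apply.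
Qed.

Definition partition_by (G : set nat) : nat_family :=
  [set D | D = set0 \/ D = G \/ exists2 j, ~ G j & D = [set j]].

Lemma partition_byP G : is_partition (partition_by G).
Proof.
split; first by left.
  apply/seteqP; split => // j _; have [Gj|nGj] := pselect (G j).
    by exists G => //; right; left.
  by exists [set j] => //; right; right; exists j.
move=> A B HA HB AB; apply: disjointP => u Au Bu; apply: AB.
case: HA => [HA|[HA|[j Gj HA]]]; subst A => //.
  by case: HB => [HB|[HB|[j Gj HB]]]; subst B => //; move: Bu => /= Eu; subst u.
case: HB => [HB|[HB|[j' Gj' HB]]]; subst B => //; first by move: Au => /= Eu; subst u.
by move: Au Bu => /= -> ->.
Qed.

End Partitions.

Section Norm.
Variables (R : realType) (F : nat_family).
Hypothesis hher : hereditary F.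
Hypothesis hcov : covers_omega F.
Implicit Types (x : nat -> R) (P : nat_family) (A B D G : set nat).

Lemma singleton_in_family k : F [set k].
Proof.
have : (\bigcup_(A in F) A) k by rewrite hcov.
by case=> A FA Ak; apply: (hher FA) => u ->.
Qed.

Lemma partition_by_sub G : F G -> partition_by G `<=` F.
Proof.
move=> FG D [->|[->|[j _ ->]]] //; last exact: singleton_in_family.
exact: hher (singleton_in_family 0) (sub0set _).
Qed.

Lemma normF_le_part x P : is_partition P -> P `<=` F ->
  (normF F x <= \esum_(A in P) supabs x A)%E.
Proof. by move=> HP PF; apply: ereal_inf_lbound; exists P. Qed.

Lemma normF_ge0 x : (0 <= normF F x)%E.
Proof.
apply: le_ereal_inf_tmp => _ [P _ <-]; apply: esum_ge0 => A _.
exact: supabs_ge0.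
Qed.

Lemma normF_ge_coord x i : ((`|x i|)%:E <= normF F x)%E.
Proof.
apply: le_ereal_inf_tmp => _ [P [HP _] <-].
have [B PB Bi] := part_block i HP.
apply: le_trans (supabs_ge x Bi) _.
by apply: esum_ge_term => // *; exact: supabs_ge0.
Qed.

Lemma normF_supported x G (c : R) : F G -> 0 <= c ->
  (forall j, ~ G j -> x j = 0) -> (forall j, G j -> `|x j| <= c) ->
  (normF F x <= c%:E)%E.
Proof.
move=> FG c0 xout xin.
apply: le_trans (normF_le_part x (partition_byP G) (partition_by_sub FG)) _.
have f0 D : partition_by G D -> (0 <= supabs x D)%E by move=> _; exact: supabs_ge0.
rewrite (esum_split1 (_ : partition_by G G) f0); last by right; left.
rewrite esum1 ?adde0.
  by apply: supabs_le => [|k /xin]; rewrite lee_fin.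
move=> D [HD nDG]; apply/eqP; rewrite eq_le supabs_ge0 andbT.
apply: supabs_le => // k; case: HD => [->|[DG|[j nGj ->]]] //.
by move=> /= ->; rewrite xout // normr0.
Qed.

End Norm.

Lemma finite_bounded (S : set nat) : finite_set S -> exists K, forall j, S j -> (j < K)%N.
Proof.
move=> /finite_fsetP [X ->]; exists (\max_(j <- finmap.enum_fset X) j).+1 => j /= jX.
by rewrite ltnS; apply: (@leq_bigmax_seq _ _ _ (fun j => j)).
Qed.

Definition fin_supp (R : realType) (d : nat -> R) : Prop :=
  exists N, forall k, (N <= k)%N -> d k = 0.

Lemma fin_suppN (R : realType) (d : nat -> R) : fin_supp d -> fin_supp (fun k => - d k).
Proof. by case=> N dN; exists N => k /dN ->; rewrite oppr0. Qed.

Lemma fin_supp_of_finite (R : realType) (d : nat -> R) (S : set nat) :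
  finite_set S -> (forall k, ~ S k -> d k = 0) -> fin_supp d.
Proof.
move=> /finite_bounded [K SK] dS; exists K => k Kk; apply: dS => /SK.
by rewrite ltnNge Kk.
Qed.

Section Perturbation.
Variables (R : realType) (F : nat_family).
Implicit Types (y d : nat -> R).

(* Membership in X^F only depends on the tail of a vector. *)
Lemma XF_add y d : XF F y -> fin_supp d -> XF F (fun k => y k + d k).
Proof.
move=> hy [N hd]; rewrite /XF /=.
have E : {near \oo, (fun n => normF F (tail n y)) =1
                    (fun n => normF F (tail n (fun k => y k + d k)))}.
  exists N => // n /= Nn; congr normF; apply: funext => k; rewrite /tail.
  by case: ifP => // nk; rewrite hd ?addr0 // (leq_trans Nn (ltnW nk)).
exact: cvg_trans (near_eq_cvg E) hy.
Qed.

(* A point is not extreme if y + d and y - d both lie in the ball for some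
   nonzero finitely supported d: it is their midpoint. *)
Lemma not_extreme_perturb y d k : XF F y -> fin_supp d -> d k != 0 ->
  (forall s : R, `|s| = 1 -> (normF F (fun j => y j + s * d j)%R <= 1)%E) ->
  ~ extreme_point (unit_ball F) y.
Proof.
move=> hy hd dk ball [_ ext]; apply: ext.
have n1 := ball 1 (normr1 R); have n2 := ball (-1) (etrans (normrN 1) (normr1 R)).
have E1 : (fun j => y j + 1 * d j) = (fun j => y j + d j).
  by apply: funext => j; rewrite mul1r.
have E2 : (fun j => y j + (-1) * d j) = (fun j => y j - d j).
  by apply: funext => j; rewrite mulN1r.
rewrite E1 in n1; rewrite E2 in n2.
exists (fun j => y j + d j), (fun j => y j - d j), (1/2).
split; first by split => //; exact: XF_add.
split; first by split => //; exact: XF_add hy (fin_suppN hd).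
split; first by move=> /(congr1 (fun f => f k)) /eqP; apply/negP;
  rewrite -subr_eq0 addrAC subrr add0r.
split; first by move=> /(congr1 (fun f => f k)) /eqP; apply/negP;
  rewrite -subr_eq0 addrAC subrr add0r oppr_eq0.
by split; [apply/andP; split; lra | apply: funext => j; lra].
Qed.

End Perturbation.

Lemma sign_extreme (R : realFieldType) (u a b t : R) : `|u| = 1 ->
  `|a| <= 1 -> `|b| <= 1 -> 0 < t < 1 -> u = (1 - t) * a + t * b -> a = u.
Proof.
move=> /eqP; rewrite eqr_norml ler01 andbT => /orP [] /eqP ->;
rewrite !ler_norml => /andP [a1 a2] /andP [b1 b2] /andP [t0 t1] E; nra.
Qed.

Section Maximal.
Variables (R : realType) (F : nat_family).
Hypothesis hher : hereditary F.
Hypothesis hcov : covers_omega F.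
Implicit Types (x y : nat -> R) (A : set nat).

Lemma maximal_nonempty A : maximal_elt F A -> exists a, A a.
Proof.
move=> [FA maxA]; apply: contrapT => nA; apply: (maxA 0) => [A0|].
  by apply: nA; exists 0.
apply: (hher (singleton_in_family hher hcov 0)) => u [Au|//].
by exfalso; apply: nA; exists u.
Qed.

(* A vector of norm at most one that is unimodular on a maximal A vanishes
   outside A: any further mass would need a second block of the partition. *)
Lemma maximal_forces A x : maximal_elt F A ->
  (forall i, A i -> `|x i| = 1) -> (normF F x <= 1)%E ->
  forall j, ~ A j -> x j = 0.
Proof.
move=> mA xA xn j nAj; apply: contrapT => /eqP xj.
have [a0 Aa0] := maximal_nonempty mA.
pose m := Num.min `|x j| 1.
have m0 : 0 < m by rewrite lt_min normr_gt0 xj ltr01.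
have [_ [P [HP PF] <-]] : exists2 s, [set \esum_(A in P) supabs x A | P in
    [set P | is_partition P /\ P `<=` F]] s & (s < (1 + m)%:E)%E.
  by apply: ereal_inf_lt; apply: le_lt_trans xn _; rewrite lte_fin ltrDl.
apply/negP; rewrite -leNgt.
have f0 D : P D -> (0 <= supabs x D)%E by move=> _; exact: supabs_ge0.
have [B PB Ba0] := part_block a0 HP.
have wB : (1%:E <= supabs x B)%E by rewrite -(xA _ Aa0); exact: supabs_ge.
have [AB|/existsNP [a1 /not_implyP [Aa1 nBa1]]] := pselect (A `<=` B).
- have nBj : ~ B j.
    move=> Bj; apply: (proj2 mA j nAj); apply: (hher (PF _ PB)).
    by move=> u [/AB|->].
  have [C PC Cj] := part_block j HP.
  apply: le_trans (esum_ge_two PB PC _ f0); last by move=> BC; subst C.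
  rewrite EFinD leeD //; apply: le_trans (supabs_ge x Cj).
  by rewrite lee_fin ge_min lexx.
- have [C PC Ca1] := part_block a1 HP.
  apply: le_trans (esum_ge_two PB PC _ f0); last by move=> BC; subst C.
  rewrite EFinD leeD //; apply: le_trans (supabs_ge x Ca1).
  by rewrite xA // lee_fin ge_min lexx orbT.
Qed.

Lemma extreme_of_maximal A y : XF F y -> maximal_elt F A ->
  (forall i, A i -> `|y i| = 1) -> (forall i, ~ A i -> y i = 0) ->
  extreme_point (unit_ball F) y.
Proof.
move=> hy mA yA yout; split.
  by split => //; apply: (normF_supported hher hcov (proj1 mA) ler01 yout) => i /yA ->.
move=> [x [z [t [[_ xn] [[_ zn] [xy [_ [t01 yE]]]]]]]]; apply: xy.
have coord (v : nat -> R) i : (normF F v <= 1)%E -> `|v i| <= 1.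
  by move=> vn; rewrite -lee_fin (le_trans (normF_ge_coord F v i) vn).
have xA i : A i -> x i = y i.
  move=> Ai; apply: sign_extreme (yA i Ai) (coord _ _ xn) (coord _ _ zn) t01 _.
  by rewrite yE.
apply: funext => j; have [Aj|nAj] := pselect (A j); first exact: xA.
have xA1 i : A i -> `|x i| = 1 by move=> Ai; rewrite (xA i Ai) yA.
by rewrite (maximal_forces mA xA1 xn nAj) (yout _ nAj).
Qed.

End Maximal.

(* Limit of a sequence of partitions Pn, given through blocks blk n i (the
   block of Pn n containing i) converging on finite windows to sets E i. *)
Section LimitPartition.
Variables (Pn : nat -> nat_family) (blk : nat -> nat -> set nat) (E : nat -> set nat).
Hypothesis Pn_part : forall n, is_partition (Pn n).
Hypothesis blk_in : forall n i, Pn n (blk n i).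
Hypothesis blk_mem : forall n i, blk n i i.
Hypothesis approx : forall K N, exists n, (N <= n)%N /\
  forall i k, (i < K)%N -> (k < K)%N -> (blk n i k <-> E i k).

Lemma blk_eq n i j : blk n i j -> blk n j = blk n i.
Proof. by move=> ij; apply: part_uniq (Pn_part n) (blk_in n j) (blk_in n i) (blk_mem n j) ij. Qed.

Lemma limit_mem i : E i i.
Proof. by have [n [_ /(_ i i (ltnSn i) (ltnSn i)) <-]] := approx i.+1 0. Qed.

Lemma limit_eq i j : E i j -> E j = E i.
Proof.
move=> Eij; apply: funext => k; apply: propext.
have [n [_ agree]] := approx (maxn (maxn i j) k).+1 0.
have [iK jK kK] : [/\ (i < (maxn (maxn i j) k).+1)%N, (j < (maxn (maxn i j) k).+1)%N
                    & (k < (maxn (maxn i j) k).+1)%N].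
  by rewrite !ltnS !leq_max !leqnn ?orbT.
rewrite -(agree i k iK kK) -(agree j k jK kK) (blk_eq (_ : blk n i j)) //.
by rewrite (agree i j iK jK).
Qed.

Definition limit_family : nat_family := [set D | D = set0 \/ exists i, D = E i].

Lemma limit_partition : is_partition limit_family.
Proof.
split; first by left.
  by apply/seteqP; split => // j _; exists (E j); [right; exists j | exact: limit_mem].
move=> A B [->|[i ->]] [->|[i' ->]] neq; apply: disjointP => u //= Eiu Ei'u.
by apply: neq; rewrite -(limit_eq Eiu) (limit_eq Ei'u).
Qed.

Lemma limit_finite_sum_le (R : realType) (f : set nat -> \bar R) (X : set (set nat)) N :
  (forall D, (0 <= f D)%E) -> (forall D D', D `<=` D' -> (f D <= f D')%E) ->
  (forall i, finite_set (E i)) -> finite_set X -> X `<=` limit_family ->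
  exists n, (N <= n)%N /\ (\esum_(D in X) f D <= \esum_(D in Pn n) f D)%E.
Proof.
move=> f0 fmono Efin Xfin XL.
have [K HK] : exists K, forall D j, X D -> D j -> (j < K)%N.
  have Dfin D : X D -> finite_set D by move=> /XL [->|[i ->]] //; exact: finite_set0.
  have [K HK] := finite_bounded (bigcup_finite Xfin Dfin).
  by exists K => D j XD Dj; apply: HK; exists D.
have [n [Nn agree]] := approx K N; exists n; split => //.
pose phi D := \bigcup_(j in D) blk n j.
have phiE i : X (E i) -> phi (E i) = blk n i.
  move=> XEi; apply/seteqP; split => [k [j Eij]|k ik]; last by exists i => //; exact: limit_mem.
  by rewrite (blk_eq (_ : blk n i j)) // (agree i j) ?(HK _ _ XEi) //; exact: limit_mem.
have phi0 : phi set0 = set0 by apply/seteqP; split => j // [].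
have phi_in D : X D -> Pn n (phi D).
  move=> XD; case: (XL D XD) => [DE|[i DE]]; subst D; last by rewrite phiE.
  by rewrite phi0; case: (Pn_part n).
have inj : set_inj X phi.
  move=> D D' /set_mem XD /set_mem XD'.
  case: (XL D XD) => [DE|[i DE]]; case: (XL D' XD') => [D'E|[i' D'E]]; subst D D' => //.
  - by rewrite phi0 phiE // => /seteqP [_ /(_ i' (blk_mem n i'))].
  - by rewrite phi0 phiE // => /seteqP [/(_ i (blk_mem n i))].
  rewrite !phiE // => blk_ii'.
  have Eii' : E i i'.
    by rewrite -(agree i i') ?(HK _ _ XD (limit_mem i)) ?(HK _ _ XD' (limit_mem i')) // blk_ii'.
  by rewrite (limit_eq Eii').
apply: (@le_trans _ _ (\esum_(D in X) f (phi D))%E).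
  by apply: le_esum => D XD; apply: fmono => j Dj; exists j.
rewrite -(esum_image X phi f inj); apply: esum_le_subset => // _ [D XD <-].
exact: phi_in.
Qed.

End LimitPartition.

Definition cantor_seq := prod_topology (fun _ : nat => cantor_space).

Lemma nbhs_agree (h : cantor_seq) (K : nat) :
  nbhs h [set h' : cantor_seq | forall i k, (i < K)%N -> (k < K)%N -> h' i k = h i k].
Proof.
have coord (ik : 'I_K * 'I_K) : nbhs h [set h' : cantor_seq | h' ik.1 ik.2 = h ik.1 ik.2].
  have inner : nbhs (h ik.1) [set c : cantor_space | c ik.2 = h ik.1 ik.2].
    exact: (@proj_continuous nat (fun _ => bool) ik.2 _ _ (discrete_set1 _)).
  exact: (@proj_continuous nat (fun _ => cantor_space) ik.1 _ _ inner).
apply: filterS (@filter_forall _ _ (fun (ik : 'I_K * 'I_K) (h' : cantor_seq) =>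
  h' ik.1 ik.2 = h ik.1 ik.2) (nbhs h) _ coord).
by move=> h' /= agree i k iK kK; exact: (agree (Ordinal iK, Ordinal kK)).
Qed.

Lemma cluster_agreement (A : set cantor_seq) (g : nat -> cantor_seq) :
  compact A -> (forall n, A (g n)) ->
  exists2 h, A h & forall K N, exists n, (N <= n)%N /\
    forall i k, (i < K)%N -> (k < K)%N -> g n i k = h i k.
Proof.
move=> cA Ag.
have [|h [Ah clh]] := cA (g @ \oo) _; first by exists 0 => // n _; exact: Ag.
exists h => // K N.
have tailN : (g @ \oo) (g @` [set n | (N <= n)%N]) by exists N => // n Nn; exists n.
by have [_ [[n Nn <-] agree]] := clh _ _ tailN (nbhs_agree h K); exists n.
Qed.

Section Attain.
Variables (R : realType) (F : nat_family).
Hypothesis hfin : finite_family F.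
Hypothesis hcomp : compact_family F.
Hypothesis hher : hereditary F.

Lemma near_optimal_partitions (y : nat -> R) : normF F y \is a fin_num ->
  exists Pn : nat -> nat_family, forall n, [/\ is_partition (Pn n), Pn n `<=` F &
    (\esum_(A in Pn n) supabs y A < normF F y + (n.+1%:R^-1)%:E)%E].
Proof.
move=> yfin; suff /choice [Pn PnP] : forall n : nat, exists P, [/\ is_partition P, P `<=` F &
    (\esum_(A in P) supabs y A < normF F y + (n.+1%:R^-1)%:E)%E] by exists Pn.
move=> n; have n0 : 0 < n.+1%:R^-1 :> R by rewrite invr_gt0 ltr0Sn.
by have [_ [P [HP PF] <-] Plt] := lb_ereal_inf_adherent n0 yfin; exists P.
Qed.

(* The infimum defining the norm is attained: a limit (by Tychonoff) of
   almost optimal partitions is an optimal one. *)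
Lemma normF_attained (y : nat -> R) : (normF F y < +oo)%E ->
  exists P, [/\ is_partition P, P `<=` F &
                (\esum_(A in P) supabs y A <= normF F y)%E].
Proof.
move=> ylt.
have yfin : normF F y \is a fin_num by rewrite ge0_fin_numE // normF_ge0.
have [Pn PnP] := near_optimal_partitions yfin.
have Pn_part n : is_partition (Pn n) by case: (PnP n).
have PnF n : Pn n `<=` F by case: (PnP n).
have /choice [b bP] : forall ni : nat * nat, exists D, Pn ni.1 D /\ D ni.2.
  by move=> [n i]; have [D PD Di] := part_block i (Pn_part n); exists D.
pose blk n i := b (n, i).
have bin n i : Pn n (blk n i) by case: (bP (n, i)).
have bmem n i : blk n i i by case: (bP (n, i)).
pose C := to_cantor @` F.
have [|h Ch agree] := @cluster_agreement [set h | forall i, C (h i)]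
    (fun n i => to_cantor (blk n i)) (@tychonoff _ (fun _ => cantor_space) _ (fun _ => hcomp)).
  by move=> n i; exists (blk n i) => //; exact: PnF (bin n i).
pose E i : set nat := [set k | h i k].
have EF i : F (E i).
  have [D FD Dh] := Ch i; suff -> : E i = D by [].
  by apply: funext => k; rewrite /E /= -Dh /to_cantor asboolE.
have approx K N : exists n, (N <= n)%N /\
    forall i k, (i < K)%N -> (k < K)%N -> (blk n i k <-> E i k).
  have [n [Nn agr]] := agree K N; exists n; split => // i k iK kK.
  by rewrite /E /= -(agr i k iK kK) /to_cantor asboolE.
exists (limit_family E); split; first exact: (limit_partition Pn_part bin bmem approx).
  by move=> D [->|[i ->]] //; exact: hher (EF 0) (sub0set _).
apply/lee_addgt0Pr => e e0.
have [N _ Ne] := near_infty_natSinv_lt (PosNum e0).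
apply: ge_ereal_sup => _ [X [Xfin XL] <-]; rewrite -esum_fset //; last by move=> *; exact: supabs_ge0.
have [n [Nn Xle]] := limit_finite_sum_le Pn_part bin bmem approx N
  (fun D => supabs_ge0 y D) (fun D D' => @supabs_sub R y D D') (fun i => hfin (EF i)) Xfin XL.
apply: (le_trans Xle); case: (PnP n) => _ _ /ltW /le_trans; apply.
by rewrite leeD2l // lee_fin ltW // Ne.
Qed.

End Attain.

Definition two_block_coef (R : realType) (B1 B2 : set nat) (a b : R) (k : nat) : R :=
  if `[< B1 k >] then a else if `[< B2 k >] then - b else 0.

Section Forward.
Variables (R : realType) (F : nat_family).
Hypothesis hfin : finite_family F.
Hypothesis hher : hereditary F.
Hypothesis hcov : covers_omega F.

(* An extreme point supported by a member G of F is unimodular on G: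
   otherwise one coordinate of G can be moved in both directions. *)
Lemma extreme_unimodular_on (y : nat -> R) G : extreme_point (unit_ball F) y ->
  F G -> (forall k, ~ G k -> y k = 0) -> forall i, G i -> `|y i| = 1.
Proof.
move=> ext FG yout i Gi; have [[hy yn] _] := ext.
have yle j : `|y j| <= 1 by rewrite -lee_fin (le_trans (normF_ge_coord F y j) yn).
apply/eqP; rewrite eq_le yle leNgt /=; apply/negP => yi1.
pose d j : R := if j == i then 1 - `|y i| else 0.
apply: (@not_extreme_perturb R F y d i hy _ _ _ ext).
- by exists i.+1 => j ij; rewrite /d ifF //; apply/negbTE; rewrite neq_ltn ij orbT.
- by rewrite /d eqxx subr_eq0 eq_sym lt_eqF.
move=> s s1; apply: (normF_supported hher hcov FG ler01) => j Gj.
  have ji : j != i by apply: contraPneq Gj => ->.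
  by rewrite /d (negbTE ji) mulr0 addr0 yout.
have [->|ji] := eqVneq j i; last by rewrite /d (negbTE ji) mulr0 addr0.
rewrite /d eqxx (le_trans (ler_normD _ _)) // normrM s1 mul1r ger0_norm; lra.
Qed.

Section OptimalPartition.
Variables (y : nat -> R) (P : nat_family).
Hypothesis ext : extreme_point (unit_ball F) y.
Hypothesis HP : is_partition P.
Hypothesis PF : P `<=` F.
Hypothesis Pw : (\esum_(A in P) supabs y A <= 1)%E.

Let w0 D : P D -> (0 <= supabs y D)%E. Proof. by move=> _; exact: supabs_ge0. Qed.

Lemma reweight_two_blocks B1 B2 (l1 l2 a b s : R) : P B1 -> P B2 -> B1 <> B2 ->
  supabs y B1 = l1%:E -> supabs y B2 = l2%:E -> a * l1 = b * l2 ->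
  0 <= a <= 1 -> 0 <= b <= 1 -> `|s| = 1 ->
  (\esum_(D in P) supabs (fun k => y k + s * (two_block_coef B1 B2 a b k * y k))%R D <=
   \esum_(D in P) supabs y D)%E.
Proof.
move=> PB1 PB2 B12 E1 E2 ab a01 b01 s1; set c := two_block_coef B1 B2 a b.
have cB1 k : B1 k -> c k = a by move=> B1k; rewrite /c /two_block_coef asboolT.
have cB2 k : B2 k -> c k = - b.
  move=> B2k; rewrite /c /two_block_coef asboolF ?asboolT // => B1k.
  by apply: B12; exact: part_uniq HP PB1 PB2 B1k B2k.
have sa : -1 <= s * a <= 1 by rewrite -ler_norml normrM s1 mul1r ger0_norm; case/andP: a01.
have sb : -1 <= s * b <= 1 by rewrite -ler_norml normrM s1 mul1r ger0_norm; case/andP: b01.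
apply: (esum_le_two_exceptions PB1 PB2 B12) => [D _|D _|D PD D1 D2|];
  [exact: supabs_ge0 | exact: supabs_ge0 | |].
- rewrite (@eq_supabs _ _ y) // => k Dk.
  rewrite /c /two_block_coef !asboolF ?mul0r ?mulr0 ?addr0 // => Bk;
    [apply: D2 | apply: D1]; exact: part_uniq HP PD _ Dk Bk.
rewrite E1 E2 -EFinD.
apply: (@le_trans _ _ (((1 + s * a) * l1)%R%:E + ((1 - s * b) * l2)%R%:E)%E).
  apply: leeD; apply: supabs_le_scaled.
  - by move: sa => /andP [? ?]; lra.
  - by move=> k B1k; rewrite cB1 // mulrDl mul1r mulrA.
  - by rewrite E1.
  - by move: sb => /andP [? ?]; lra.
  - by move=> k B2k; rewrite cB2 // mulrBl mul1r mulNr mulrN mulrA.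
  - by rewrite E2.
have sab : s * a * l1 = s * b * l2 by rewrite -mulrA ab mulrA.
by rewrite -EFinD lee_fin mulrDl mulrBl !mul1r sab; lra.
Qed.

(* Weight can be moved between two blocks carrying positive weight, so an
   extreme point has at most one such block. *)
Lemma no_two_positive_blocks B1 B2 : P B1 -> P B2 -> B1 <> B2 ->
  (0 < supabs y B1)%E -> (0 < supabs y B2)%E -> False.
Proof.
move=> PB1 PB2 B12 w1 w2; have [[hy _] _] := ext.
have wfin B : P B -> supabs y B = (fine (supabs y B))%:E.
  move=> PB; rewrite fineK // ge0_fin_numE ?supabs_ge0 //.
  exact: le_lt_trans (le_trans (esum_ge_term PB w0) Pw) (ltry 1).
set l1 := fine (supabs y B1) in wfin; set l2 := fine (supabs y B2).
have E1 : supabs y B1 = l1%:E := wfin B1 PB1.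
have E2 : supabs y B2 = l2%:E := wfin B2 PB2.
have l1p : 0 < l1 by rewrite -lte_fin -E1.
have l2p : 0 < l2 by rewrite -lte_fin -E2.
pose m := Num.min l1 l2; pose a := m / l1; pose b := m / l2.
have m0 : 0 < m by rewrite lt_min l1p l2p.
have a01 : 0 <= a <= 1.
  by rewrite /a divr_ge0 ?(ltW m0) ?(ltW l1p) //= ler_pdivrMr // mul1r ge_min lexx.
have b01 : 0 <= b <= 1.
  by rewrite /b divr_ge0 ?(ltW m0) ?(ltW l2p) //= ler_pdivrMr // mul1r ge_min lexx orbT.
have ab : a * l1 = b * l2 by rewrite /a /b !divfK ?gt_eqF.
have [k0 B1k0 yk0] := supabs_gt0 w1.
apply: (@not_extreme_perturb R F y (fun k => two_block_coef B1 B2 a b k * y k) k0 hy _ _ _ ext).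
- apply: (@fin_supp_of_finite _ _ (B1 `|` B2)).
    by rewrite finite_setU; split; apply: hfin; apply: PF.
  by move=> k Bk; rewrite /two_block_coef !asboolF ?mul0r // => Bk'; apply: Bk; by [left | right].
- by rewrite /= /two_block_coef asboolT // mulf_neq0 // gt_eqF // divr_gt0.
move=> s s1; apply: le_trans (normF_le_part _ HP PF) _; apply: le_trans Pw.
exact: (reweight_two_blocks PB1 PB2 B12 E1 E2 ab a01 b01 s1).
Qed.

Lemma extreme_block_support : exists B, P B /\ forall k, ~ B k -> y k = 0.
Proof.
have vanish C k : P C -> C k -> ~ (0 < supabs y C)%E -> y k = 0.
  move=> PC Ck /negP; rewrite lt_neqAle supabs_ge0 andbT negbK => /eqP w0C.
  exact: supabs_eq0 (esym w0C) Ck.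
have [[B [PB wB]]|none] := pselect (exists B, P B /\ (0 < supabs y B)%E).
  exists B; split => // k nBk; have [C PC Ck] := part_block k HP.
  apply: (vanish C k PC Ck) => wC; apply: no_two_positive_blocks PB PC _ wB wC.
  by move=> BC; apply: nBk; rewrite BC.
exists set0; split; first by case: HP.
move=> k _; have [C PC Ck] := part_block k HP.
by apply: (vanish C k PC Ck) => wC; apply: none; exists C.
Qed.

End OptimalPartition.

Lemma extreme_maximal_support (y : nat -> R) : compact_family F ->
  extreme_point (unit_ball F) y ->
  exists A, [/\ maximal_elt F A, forall i, A i -> `|y i| = 1 & forall i, ~ A i -> y i = 0].
Proof.
move=> hcomp ext; have [[hy yn] _] := ext.
have [P [HP PF Py]] := normF_attained hfin hcomp hher (le_lt_trans yn (ltry 1)).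
have [B [PB yout]] := extreme_block_support ext HP PF (le_trans Py yn).
have FB := PF B PB.
exists B; split => //; last exact: extreme_unimodular_on ext FB yout.
split => // k nBk FBk.
have youtk j : ~ (B `|` [set k]) j -> y j = 0.
  by move=> Bkj; apply: yout => Bj; apply: Bkj; left.
have := extreme_unimodular_on ext FBk youtk (or_intror erefl).
by rewrite yout // normr0 => /eqP; rewrite eq_sym oner_eq0.
Qed.

End Forward.

Unset Implicit Arguments.

Theorem mainTheorem10 (R : realType) (F : nat_family)
  (hfin : finite_family F) (hcomp : compact_family F) (hher : hereditary F)
  (hcov : covers_omega F) (y : nat -> R) (hy : XF F y) :
  extreme_point (unit_ball F) y <->
  exists A, maximal_elt F A /\
    exists eps : nat -> R,
      (forall i, A i -> eps i = 1 \/ eps i = -1) /\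
      (forall i, A i -> y i = eps i) /\ (forall i, ~ A i -> y i = 0).
Proof.
split => [ext | [A [maxA [eps [eps_sign [yA yout]]]]]].
  have [A [maxA yA yout]] := extreme_maximal_support hfin hher hcov hcomp ext.
  exists A; split => //; exists y; split => // i Ai.
  by move/eqP: (yA i Ai); rewrite eqr_norml ler01 andbT => /orP [] /eqP; [left | right].
have yA1 i : A i -> `|y i| = 1.
  by move=> Ai; rewrite yA //; case: (eps_sign i Ai) => ->; rewrite ?normrN normr1.
exact: (extreme_of_maximal hher hcov hy maxA yA1 yout).
Qed.
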